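(* Persistence equivalence and Forman equivalence of discrete Morse functions on graphs are independent: there exist a finite tree $T$ with $n$ simplices and discrete Morse functions $f,g\colon T\to[0,n]$ that are persistence equivalent but not Forman equivalent, and discrete Morse functions $f',g'\colon T\to[0,n]$ that are Forman equivalent but not persistence equivalent.
   Context: For a finite simple graph $G$, its simplices are its vertices and edges; write $v<e$ if vertex $v$ is an endpoint of edge $e$; $n$ is the total number of simplices. A discrete Morse function is a function $f$ from the simplices to $[0,n]$ such that: (i) $v<e$ implies $f(v)\le f(e)$; (ii) $\min f=0$; (iii) every value is attained by at most two simplices, and if $f(\sigma)=f(\tau)$ with $\sigma\neq\tau$ then one is an endpoint of the other; (iv) if a value $f(\sigma)$ is attained only by $\sigma$, then $f(\sigma)\in\mathbb{N}$; such $\sigma$ is critical, otherwise regular. The induced gradient vector field $V_f$ is the set of pairs $\{v<e\}$ with $f(v)=f(e)$ (the regular pairs). $f,g$ are Forman equivalent if $V_f=V_g$. With critical values $c_0<\dots<c_{m-1}$, the level subcomplexes $G_{c_i}=\{\sigma:f(\sigma)\le c_i\}$ form a filtration whose persistent homology (over a field) gives the persistence diagram $D_f$ (multiset of (birth value, death value) pairs, death $\infty$ for classes never dying); $f,g$ are persistence equivalent if $D_f=D_g$. *)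

From HB Require Import structures.
From mathcomp Require Import all_boot all_order all_algebra.
Set Implicit Arguments. Unset Strict Implicit. Unset Printing Implicit Defensive.
Import Order.TTheory GRing.Theory Num.Theory.
Local Open Scope ring_scope.

Record sgraph := SGraph {
  gV : finType;
  gE : {set {set gV}};
  gE2 : forall e, e \in gE -> #|e| = 2%N }.

Notation edge G := {e : {set gV G} | e \in gE G}.

Notation simplex G := (gV G + edge G)%type.

Definition face (G : sgraph) (s t : simplex G) : bool :=
  match s, t with
  | inl v, inr e => v \in val e
  | _, _ => false
  end.

Definition adj (G : sgraph) : rel (gV G) := fun u v => [set u; v] \in gE G.

Definition is_tree (G : sgraph) : Prop :=
  [/\ (0 < #|gV G|)%N,
      (forall u v : gV G, connect (@adj G) u v) &
      (forall p : seq (gV G), ~~ [&& (3 <= size p)%N, cycle (@adj G) p & uniq p])].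

Section DMF.
Variables (R : realFieldType) (G : sgraph).
Implicit Types (f : simplex G -> R).

Definition nsimp : nat := #|{: simplex G}|.

Definition critical f (s : simplex G) : bool :=
  [forall t, (f t == f s) ==> (t == s)].

Definition dmf f : Prop :=
  [/\ (forall s, 0 <= f s <= (nsimp)%:R) /\ (forall s t, face s t -> f s <= f t),
      (exists s, f s = 0),
      (forall s, (#|[set t | f t == f s]| <= 2)%N),
      (forall s t, s != t -> f s = f t -> face s t \/ face t s) &
      (forall s, critical f s -> exists k : nat, f s = k%:R)].

Definition gradient f : {set simplex G * simplex G} :=
  [set p | face p.1 p.2 && (f p.1 == f p.2)].

Definition forman_equiv f g : Prop := gradient f = gradient g.

Definition cvals f : seq R :=
  sort <=%R [seq f s | s <- enum {: simplex G} & critical f s].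
Definition ncrit f : nat := size (cvals f).
Definition cval f (i : nat) : R := nth 0 (cvals f) i.

End DMF.

(* Simplicial homology of a graph over a field F, with matrices acting on
   row vectors.  Vertices / edges are indexed via enum_rank; the edge
   {u,v} is oriented from lower to higher enum_rank. *)
Section Homology.
Variables (F : fieldType) (R : realFieldType) (G : sgraph).
Implicit Types (f : simplex G -> R).

Definition nV := #|gV G|.
Definition nE := #|{: edge G}|.

Definition bdry : 'M[F]_(nE, nV) :=
  \matrix_(i < nE, j < nV)
    let e := val (enum_val i) in let v := enum_val j in
    if v \in e then
      (if [forall w in e, (enum_rank w <= enum_rank v)%N] then 1 else -1)
    else 0.

(* chain spaces of the level subcomplex G_a = {sigma | f sigma <= a} *)
Definition C0 f (a : R) : 'M[F]_nV :=
  diag_mx (\row_(j < nV) (f (inl (enum_val j)) <= a)%R%:R).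
Definition C1 f (a : R) : 'M[F]_nE :=
  diag_mx (\row_(i < nE) (f (inr (enum_val i)) <= a)%R%:R).

(* persistent Betti numbers beta_k^{a,b} = dim Z_k(G_a) / (Z_k(G_a) cap B_k(G_b)) *)
Definition pbetti (k : nat) f (a b : R) : nat :=
  if k == 0%N then
    (\rank (C0 f a) - \rank (C0 f a :&: (C1 f b *m bdry))%MS)%N
  else if k == 1%N then
    \rank (C1 f a :&: kermx bdry)%MS   (* B_1 = 0: no 2-simplices *)
  else 0%N.

(* beta_k^{i,j} for the filtration G_{c_0} <= ... <= G_{c_{m-1}}, with
   beta_k^{-1,j} = 0; indices are shifted: bI i' j, i' = i+1. *)
Definition betaI (k : nat) f (i' j : nat) : int :=
  if i' is i.+1 then (pbetti k f (cval f i) (cval f j))%:Z else 0.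

Definition mult_fin (k : nat) f (i j : nat) : int :=
  betaI k f i.+1 j.-1 - betaI k f i.+1 j - betaI k f i j.-1 + betaI k f i j.

Definition mult_inf (k : nat) f (i : nat) : int :=
  betaI k f i.+1 (ncrit f).-1 - betaI k f i (ncrit f).-1.

(* persistence diagram D_f as a multiset of (birth, death) pairs over all
   dimensions; death None = infinity *)
Definition diagram f (b : R) (d : option R) : int :=
  \sum_(k < 2)
   (\sum_(i < ncrit f) \sum_(j < ncrit f | (i < j)%N)
       (if (b == cval f i) && (d == Some (cval f j)) then mult_fin k f i j else 0)
    + \sum_(i < ncrit f)
       (if (b == cval f i) && (d == None) then mult_inf k f i else 0)).

Definition pers_equiv f g : Prop :=
  forall (b : R) (d : option R), diagram f b d = diagram g b d.

End Homology.

From HB Require Import structures.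
From mathcomp Require Import all_boot all_order all_algebra.
Set Implicit Arguments. Unset Strict Implicit. Unset Printing Implicit Defensive.
Import Order.TTheory GRing.Theory Num.Theory.
Local Open Scope ring_scope.

(* The single edge K2 already separates the two equivalences.  Write (a, b, c) for
   the function taking the values a, b on the two vertices and c on the edge.
   Both (0, 1, 1) and (1, 0, 1) have a single critical simplex, a vertex of value 0,
   so both diagrams consist of the one essential point (0, oo); but they pair
   different vertices with the edge.  The injective functions (0, 1, 2) and (0, 1, 3)
   have no regular pairs, hence the same (empty) gradient field, yet the component
   born at 1 dies at 2, resp. 3, so only the first diagram contains (1, 2). *)

Section Morse.
Variables (R : realFieldType) (G : sgraph).
Implicit Types (f : simplex G -> R).

Lemma criticalP f s : reflect (forall t, f t = f s -> t = s) (critical f s).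
Proof.
apply: (iffP forallP) => [H t /eqP fts | H t]; first exact/eqP/(implyP (H t)).
by apply/implyP => /eqP /H ->.
Qed.

Lemma cvals_critical1 f s0 : (forall s, critical f s = (s == s0)) -> cvals f = [:: f s0].
Proof.
move=> crit; rewrite /cvals (eq_filter crit).
by rewrite (filter_pred1_uniq (enum_uniq _) (mem_enum _ s0)).
Qed.

Lemma critical_inj f s : injective f -> critical f s.
Proof. by move=> f_inj; apply/criticalP => t /f_inj. Qed.

Lemma face_neq (s t : simplex G) : face s t -> s != t.
Proof. by case: s t => [v|e] [w|x]. Qed.

Lemma gradient_inj f : injective f -> gradient f = set0.
Proof.
move=> f_inj; apply/setP => -[s t]; rewrite !inE /=.
by apply/andP => -[/face_neq/eqP st /eqP/f_inj].
Qed.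

End Morse.

Section Persistence.
Variables (F : fieldType) (R : realFieldType) (G : sgraph).
Implicit Types (f : simplex G -> R).

Lemma diagram_cvals1 f c b d : cvals f = [:: c] ->
  diagram F f b d =
    if (b == c) && (d == None) then (pbetti F 0 f c c + pbetti F 1 f c c)%:Z else 0.
Proof.
move=> cv; rewrite /diagram /mult_inf /betaI /ncrit /cval cv /=.
have no_pair (M : 'I_1 -> int) : \sum_(j < 1 | (0 < j)%N) M j = 0.
  by rewrite big_pred0 // => -[[]].
rewrite !big_ord_recr !big_ord0 /= !no_pair !add0r !subr0.
by case: ifP; rewrite ?addr0.
Qed.

Lemma diagram_notin_cvals f b x : x \notin cvals f -> diagram F f b (Some x) = 0.
Proof.
move=> xNc; apply: big1 => k _; rewrite [X in _ + X]big1 ?addr0 => [|i _]; last by rewrite andbF.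
apply: big1 => i _; apply: big1 => j _.
case: (Some x =P Some (cval f j)) => [[xj]|]; last by rewrite andbF.
case/negP: xNc; rewrite xj; exact: mem_nth.
Qed.

Lemma diagram_uniq_cvals f i j : uniq (cvals f) -> (i < j < ncrit f)%N ->
  diagram F f (cval f i) (Some (cval f j)) = mult_fin F 0 f i j + mult_fin F 1 f i j.
Proof.
move=> cv_uniq /andP[ij jn]; have iN := ltn_trans ij jn.
have cvalE m (l : 'I_(ncrit f)) : (m < ncrit f)%N -> (cval f m == cval f l) = (m == l).
  by move=> mN; rewrite /cval nth_uniq.
have point k : \sum_(i' < ncrit f) \sum_(j' < ncrit f | (i' < j')%N)
    (if (cval f i == cval f i') && (Some (cval f j) == Some (cval f j'))
     then mult_fin F k f i' j' else 0) = mult_fin F k f i j.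
  rewrite (bigD1 (Ordinal iN)) //= [X in _ + X]big1 ?addr0 => [|i' i'Ni]; last first.
    apply: big1 => j' _; rewrite cvalE // -[i]/(val (Ordinal iN)) val_eqE eq_sym.
    by rewrite (negbTE i'Ni).
  rewrite (bigD1 (Ordinal jn)) //= !eqxx /=.
  rewrite [X in _ + X]big1 ?addr0 // => j' /andP[_ j'Nj].
  by rewrite [Some _ == _]cvalE // -[j]/(val (Ordinal jn)) val_eqE eq_sym (negbTE j'Nj).
rewrite /diagram big_ord_recr big_ord1 /= !point.
by rewrite !big1 ?addr0 // => i' _; rewrite andbF.
Qed.

Lemma rank_C0_single f a v0 : (forall v, (f (inl v) <= a) = (v == v0)) ->
  \rank (C0 F f a) = 1%N.
Proof.
move=> sub_a; suff -> : C0 F f a = delta_mx (enum_rank v0) (enum_rank v0).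
  exact: mxrank_delta.
have rankE m : (m == enum_rank v0) = (enum_val m == v0).
  by rewrite -(inj_eq enum_val_inj) enum_rankK.
apply/matrixP => k l; rewrite !mxE sub_a !rankE.
have [<-|kNl] := eqVneq k l; first by rewrite andbb.
have [kv0|//] := eqVneq (enum_val k) v0.
by rewrite -kv0 (inj_eq enum_val_inj) eq_sym (negbTE kNl).
Qed.

Lemma pbetti0_no_edges f a b : (forall x, ~~ (f (inr x) <= b)) ->
  pbetti F 0 f a b = \rank (C0 F f a).
Proof.
move=> no_edges; suff C1b : C1 F f b = 0 by rewrite /pbetti /= C1b mul0mx capmx0 mxrank0 subn0.
by apply/matrixP => k l; rewrite !mxE (negbTE (no_edges _)) mul0rn.
Qed.

Lemma pbetti0_all_edges f a b : (forall x, f (inr x) <= b) ->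
  pbetti F 0 f a b = (\rank (C0 F f a) - \rank (C0 F f a :&: bdry F G))%N.
Proof.
move=> all_edges; suff C1b : C1 F f b = 1%:M by rewrite /pbetti /= C1b mul1mx.
by apply/matrixP => k l; rewrite !mxE all_edges.
Qed.

Lemma C0_all_vertices f a : (forall v, f (inl v) <= a) -> C0 F f a = 1%:M.
Proof. by move=> all_vertices; apply/matrixP => k l; rewrite !mxE all_vertices. Qed.

End Persistence.

Definition K2_edges : {set {set bool}} := [set [set true; false]].

Lemma K2_edges_card (e : {set bool}) : e \in K2_edges -> #|e| = 2%N.
Proof. by rewrite in_set1 => /eqP ->; rewrite cards2. Qed.

Definition K2 : sgraph := SGraph K2_edges_card.

Definition K2_edge : edge K2 := exist _ [set true; false] (set11 _).

Lemma K2_simplex_cases (s : simplex K2) :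
  [\/ s = inl true, s = inl false | s = inr K2_edge].
Proof.
case: s => [[]|x]; [exact: Or31 | exact: Or32 | apply: Or33].
by congr inr; apply: val_inj; case: x => e /=; rewrite in_set1 => /eqP.
Qed.

Lemma face_K2 (v : bool) : face (inl v : simplex K2) (inr K2_edge).
Proof. by case: v; rewrite /= !inE eqxx ?orbT. Qed.

Lemma nE_K2 : nE K2 = 1%N.
Proof. by rewrite /nE card_sig cardE /= /K2_edges enum_set1. Qed.

Lemma nV_K2 : nV K2 = 2%N.
Proof. exact: card_bool. Qed.

Lemma nsimp_K2 : nsimp K2 = 3%N.
Proof. by rewrite /nsimp card_sum -/(nE K2) nE_K2 card_bool. Qed.

Lemma K2_tree : is_tree K2.
Proof.
split; first by rewrite card_bool.
  move=> u v; have [->|uNv] := eqVneq u v; first exact: connect0.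
  by apply: connect1; case: u v uNv => -[] //= _; rewrite /adj /= in_set1 // setUC.
move=> p; apply/negP => /and3P[p3 _ /card_uniqP p_card].
have : (size p <= 2)%N by rewrite -p_card -card_bool max_card.
by rewrite leqNgt p3.
Qed.

Section K2Functions.
Variable R : realFieldType.

Definition K2_val (a b c : nat) (s : simplex K2) : nat :=
  match s with inl true => a | inl false => b | inr _ => c end.

Definition K2_fun (a b c : nat) (s : simplex K2) : R := (K2_val a b c s)%:R.

Lemma K2_fun_eq a b c s t :
  (K2_fun a b c s == K2_fun a b c t) = (K2_val a b c s == K2_val a b c t).
Proof. exact: eqr_nat. Qed.

Lemma dmf_K2_fun a b c : a != b -> (a <= c)%N -> (b <= c)%N -> (c <= 3)%N ->
  (a == 0%N) || (b == 0%N) -> dmf (K2_fun a b c).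
Proof.
move=> aNb ac bc c3 ab0; split.
- split=> [s|s t]; rewrite /K2_fun ?ler0n ler_nat ?nsimp_K2.
    by case: (K2_simplex_cases s) => ->; apply: leq_trans c3.
  by case: (K2_simplex_cases s) => ->; case: (K2_simplex_cases t) => ->.
- by case/orP: ab0 => /eqP ab0; [exists (inl true) | exists (inl false)];
    rewrite /K2_fun /= ab0.
- move=> s; have [t tNs] : exists t, K2_val a b c t != K2_val a b c s.
    have [sa|] := eqVneq (K2_val a b c s) a; last by exists (inl true); rewrite eq_sym.
    by exists (inl false); rewrite sa eq_sym.
  have : [set t | K2_fun a b c t == K2_fun a b c s] \proper [set: simplex K2].
    by rewrite properT; apply/eqP => /setP/(_ t); rewrite !inE K2_fun_eq (negbTE tNs).
  by move/proper_card; rewrite cardsT -/(nsimp K2) nsimp_K2.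
- move=> s t sNt /eqP; rewrite K2_fun_eq.
  case: (K2_simplex_cases s) sNt => ->; case: (K2_simplex_cases t) => ->;
    rewrite ?eqxx //= => _; rewrite ?(negbTE aNb) 1?eq_sym ?(negbTE aNb) // => _;
    by [left; exact: face_K2 | right; exact: face_K2].
- by move=> s _; exists (K2_val a b c s).
Qed.

Lemma K2_fun_inj a b c : uniq [:: a; b; c] -> injective (K2_fun a b c).
Proof.
move=> abc s t /eqP; rewrite K2_fun_eq.
by case: (K2_simplex_cases s) => ->; case: (K2_simplex_cases t) => -> //= /eqP st;
  move: abc; rewrite /= st !inE eqxx /= ?orbT ?andbF.
Qed.

End K2Functions.

Section K2Homology.
Variables (F : fieldType) (R : realFieldType).

Lemma bdry_K2_neq0 (v : bool) : bdry F K2 (enum_rank K2_edge) (enum_rank v) != 0.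
Proof.
rewrite !mxE !enum_rankK /= !inE.
by case: v => /=; case: ifP => _; rewrite ?oppr_eq0 oner_eq0.
Qed.

Lemma rank_bdry_K2 : \rank (bdry F K2) = 1%N.
Proof.
apply/eqP; rewrite eqn_leq -{1}nE_K2 rank_leq_row lt0n mxrank_eq0.
by apply: contraNneq (bdry_K2_neq0 true) => ->; rewrite mxE.
Qed.

Lemma pbetti1_K2 (f : simplex K2 -> R) a b : pbetti F 1 f a b = 0%N.
Proof.
apply/eqP; rewrite /pbetti /= -leqn0.
by rewrite (leq_trans (mxrankS (capmxSr _ _))) // mxrank_ker rank_bdry_K2 nE_K2.
Qed.

(* The boundary row is nonzero at [w], where every row of [C0 F f a] vanishes. *)
Lemma rank_C0_cap_bdry_K2 (f : simplex K2 -> R) a w : ~~ (f (inl w) <= a) ->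
  \rank (C0 F f a :&: bdry F K2)%MS = 0%N.
Proof.
move=> wNa; apply/eqP; apply: contraNT (bdry_K2_neq0 w) => cap_neq0.
have : (bdry F K2 <= C0 F f a :&: bdry F K2)%MS.
  rewrite -(mxrank_leqif_sup (capmxSr _ _)).2 rank_bdry_K2 eqn_leq lt0n cap_neq0 andbT.
  by rewrite -rank_bdry_K2 mxrankS ?capmxSr.
move/(submx_trans)/(_ (capmxSl _ _))/submxP => [D ->].
by rewrite mul_mx_diag !mxE enum_rankK (negbTE wNa) mulr0.
Qed.

End K2Homology.

Section Examples.
Variables (F : fieldType) (R : realFieldType).
Local Notation K2_fun := (@K2_fun R).

Lemma critical_K2_fun_011 s : critical (K2_fun 0 1 1) s = (s == inl true).
Proof.
case: (K2_simplex_cases s) => ->; rewrite ?eqxx //=.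
- apply/criticalP => t /eqP; rewrite K2_fun_eq.
  by case: (K2_simplex_cases t) => ->.
- by apply/negP => /criticalP/(_ (inr K2_edge) erefl).
- by apply/negP => /criticalP/(_ (inl false) erefl).
Qed.

Lemma critical_K2_fun_101 s : critical (K2_fun 1 0 1) s = (s == inl false).
Proof.
case: (K2_simplex_cases s) => ->; rewrite ?eqxx //=.
- by apply/negP => /criticalP/(_ (inr K2_edge) erefl).
- apply/criticalP => t /eqP; rewrite K2_fun_eq.
  by case: (K2_simplex_cases t) => ->.
- by apply/negP => /criticalP/(_ (inl true) erefl).
Qed.

Lemma pers_equiv_K2_fun_011_101 : pers_equiv F (K2_fun 0 1 1) (K2_fun 1 0 1).
Proof.
have pbetti0E (f : simplex K2 -> R) v0 : (forall x, ~~ (f (inr x) <= 0%:R)) ->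
    (forall v, (f (inl v) <= 0%:R) = (v == v0)) -> pbetti F 0 f 0%:R 0%:R = 1%N.
  by move=> no_edges sub0; rewrite pbetti0_no_edges // (rank_C0_single F sub0).
move=> b d; rewrite (diagram_cvals1 F b d (cvals_critical1 critical_K2_fun_011)).
rewrite (diagram_cvals1 F b d (cvals_critical1 critical_K2_fun_101)) /= !pbetti1_K2.
by rewrite (@pbetti0E _ true) ?(@pbetti0E _ false) // => -[] *; rewrite /K2_fun /= ?ler10 ?lexx.
Qed.

Lemma cvals_K2_fun a b c : (a < b < c)%N -> cvals (K2_fun a b c) = [:: a%:R; b%:R; c%:R].
Proof.
move=> /andP[ab bc]; have ac := ltn_trans ab bc.
have f_inj : injective (K2_fun a b c).
  by apply: K2_fun_inj; rewrite /= !inE !negb_or !neq_ltn ab bc ac.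
apply: (@irr_sorted_eq _ <%R); [exact: lt_trans | exact: ltxx | | | ].
- by rewrite sort_lt_sorted (map_inj_uniq f_inj) filter_uniq ?enum_uniq.
- by rewrite /= !ltr_nat ab bc.
move=> x; rewrite mem_sort; apply/mapP/idP => [[s _ ->]|].
  by case: (K2_simplex_cases s) => ->; rewrite !inE eqxx ?orbT.
rewrite !inE => /or3P[] /eqP ->;
  [exists (inl true) | exists (inl false) | exists (inr K2_edge)];
  by rewrite // mem_filter critical_inj // mem_enum.
Qed.

Lemma pbetti0_K2_fun_012 :
  let f := K2_fun 0 1 2 in
  [/\ pbetti F 0 f 1%:R 1%:R = 2%N, pbetti F 0 f 1%:R 2%:R = 1%N
    & pbetti F 0 f 0%:R 1%:R = pbetti F 0 f 0%:R 2%:R].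
Proof.
have le_val (n m : nat) : ((n%:R : R) <= m%:R) = (n <= m)%N by exact: ler_nat.
have C0_1 : C0 F (K2_fun 0 1 2) 1%:R = 1%:M by apply: C0_all_vertices => -[]; rewrite le_val.
split.
- by rewrite pbetti0_no_edges ?C0_1 ?mxrank1 ?nV_K2 // => x; rewrite le_val.
- rewrite pbetti0_all_edges ?C0_1 ?mxrank1 ?nV_K2 => [|x]; last by rewrite le_val.
  by rewrite capTmx ?rank_bdry_K2 ?nV_K2 // -sub1mx submx_refl.
rewrite pbetti0_no_edges ?pbetti0_all_edges => [||x]; last by rewrite le_val.
- by rewrite (@rank_C0_cap_bdry_K2 _ _ _ _ false) ?le_val ?subn0.
- by move=> x; rewrite le_val.
Qed.

Lemma diagram_K2_fun_012 : diagram F (K2_fun 0 1 2) 1%:R (Some 2%:R) = 1.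
Proof.
have cvE := cvals_K2_fun (isT : (0 < 1 < 2)%N).
have cvalE (i : nat) : cval (K2_fun 0 1 2) i = nth 0 [:: 0%:R; 1%:R; 2%:R] i.
  by rewrite /cval cvE.
rewrite -[1%:R](cvalE 1%N) -[2%:R](cvalE 2%N) diagram_uniq_cvals; last 2 first.
- by rewrite cvE /= !inE !eqr_nat.
- by rewrite /ncrit cvE.
have [p11 p12 p01] := pbetti0_K2_fun_012.
rewrite /mult_fin /betaI /= !pbetti1_K2 !cvalE /= p11 p12 p01.
by rewrite subrK !subrr addr0.
Qed.

Lemma diagram_K2_fun_013 : diagram F (K2_fun 0 1 3) 1%:R (Some 2%:R) = 0.
Proof.
apply: diagram_notin_cvals.
by rewrite (cvals_K2_fun (isT : (0 < 1 < 3)%N)) !inE !eqr_nat.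
Qed.

End Examples.

Theorem mainTheorem9 (F : fieldType) (R : realFieldType) :
  exists (T : sgraph), is_tree T /\
  exists f g f' g' : simplex T -> R,
    [/\ dmf f /\ dmf g, dmf f' /\ dmf g',
        pers_equiv F f g /\ ~ forman_equiv f g
      & forman_equiv f' g' /\ ~ pers_equiv F f' g'].
Proof.
exists K2; split; first exact: K2_tree.
exists (K2_fun R 0 1 1), (K2_fun R 1 0 1), (K2_fun R 0 1 2), (K2_fun R 0 1 3).
split; [by split; apply: dmf_K2_fun.. | split | split].
- exact: pers_equiv_K2_fun_011_101.
- move/setP/(_ (inl false, inr K2_edge)).
  by rewrite !inE /= !K2_fun_eq !inE.
- by rewrite /forman_equiv !gradient_inj //; apply: K2_fun_inj.
- by move/(_ 1%:R (Some 2%:R)); rewrite diagram_K2_fun_012 diagram_K2_fun_013.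
Qed.
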